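(* For every $n$, every $\sigma\in S_n$ and every pair $P,Q$ of standard Young tableaux of a common shape $\lambda\vdash n$, we have $\mathcal{P}(\sigma\rightarrow P,Q)=\mathcal{P}(\sigma^{-1}\rightarrow Q,P)$ and $\overline{\mathcal{P}}(\sigma\leftarrow P,Q)=\overline{\mathcal{P}}(\sigma^{-1}\leftarrow Q,P)$.
   Context: All quantities are rational functions of indeterminates $q,t$. Partitions are Young diagrams in French convention (cells $(x,y)\in\mathbb{Z}_{>0}^2$ with $x\le\lambda_y$), $\lambda'$ the conjugate; for $c=(x,y)\in\lambda$, $a_\lambda(c)=\lambda_y-x$, $\ell_\lambda(c)=\lambda'_x-y$; $n(\kappa)=\sum_{c\in\kappa}\ell_\kappa(c)$, $n'(\kappa)=\sum_{c\in\kappa}a_\kappa(c)$, $n(\rho/\kappa)=n(\rho)-n(\kappa)$, $n'(\rho/\kappa)=n'(\rho)-n'(\kappa)$. $\mathcal{U}(\lambda)$, $\mathcal{D}(\lambda)$: partitions obtained by adding, resp. removing, one cell; $\mathcal{D}^*(\lambda)=\mathcal{D}(\lambda)\cup\{\lambda\}$. For $\kappa\subseteq\rho$, $\mathcal{R}_{\rho/\kappa}$ (resp. $\mathcal{C}_{\rho/\kappa}$): cells of $\kappa$ in a row (resp. column) containing a cell of $\rho/\kappa$. $[i,j]=1-q^it^j$. For $\kappa$ obtained from $\rho$ by removing one cell: $\alpha_{\rho/\kappa}=\prod_{c\in\mathcal{R}_{\rho/\kappa}}\frac{[a_\kappa(c),\ell_\kappa(c)+1]}{[a_\rho(c),\ell_\rho(c)+1]}\prod_{c\in\mathcal{C}_{\rho/\kappa}}\frac{[a_\kappa(c)+1,\ell_\kappa(c)]}{[a_\rho(c)+1,\ell_\rho(c)]}$,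 $\overline{\alpha}_{\rho/\kappa}$ the same with the roles of ''$+1$ on the first entry'' and ''$+1$ on the second entry'' exchanged in both products, $\beta=1/\alpha$, $\overline{\beta}=1/\overline{\alpha}$. Local probabilities: $\mathcal{P}_\lambda(\lambda\rightarrow\nu)=t^{n(\nu/\lambda)}\alpha_{\nu/\lambda}$, $\overline{\mathcal{P}}_\lambda(\lambda\leftarrow\nu)=t^{n(\nu/\lambda)}\overline{\alpha}_{\nu/\lambda}$; for $\mu\in\mathcal{D}(\lambda)$, with $A=n'(\lambda/\mu)-n'(\nu/\lambda)$, $B=n(\nu/\lambda)-n(\lambda/\mu)$, $\gamma=\frac{(1-q^At^B)(1-q^{A+1}t^{B-1})}{(1-q)(1-t)}$: $\mathcal{P}_\lambda(\mu\rightarrow\nu)=t^{B-1}\alpha_{\nu/\lambda}\beta_{\lambda/\mu}/\gamma$, $\overline{\mathcal{P}}_\lambda(\mu\leftarrow\nu)=t^{B-1}\overline{\alpha}_{\nu/\lambda}\overline{\beta}_{\lambda/\mu}/\gamma$. Growths: for $\sigma\in S_n$, take the $n\times n$ grid with vertices $(i,j)$, $0\le i,j\le n$ (matrix coordinates); square $(i,j)$ has vertices NW $(i-1,j-1)$, NE $(i-1,j)$, SW $(i,j-1)$, SE $(i,j)$, and contains a 1 iff $i=\sigma(j)$. A growth associated with $\sigma$ is a labeling $\Lambda_{ij}$ of vertices by partitions with $\Lambda_{ij}\subseteq\Lambda_{i,j+1}$, $\Lambda_{ij}\subseteq\Lambda_{i+1,j}$ and $|\Lambda_{ij}|$ = number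 of squares $(i',j')$, $i'\le i$, $j'\le j$, containing a 1. $P(\Lambda)$ (resp. $Q(\Lambda)$) is the standard Young tableau with entry $i$ in the cell $\Lambda_{i,n}/\Lambda_{i-1,n}$ (resp. $\Lambda_{n,i}/\Lambda_{n,i-1}$). A square is of type III if its NE and SW vertices are both $\lambda$, NW vertex $\mu\in\mathcal{D}^*(\lambda)$, SE vertex $\nu\in\mathcal{U}(\lambda)$; then $\mathcal{P}(\square)=\mathcal{P}_\lambda(\mu\rightarrow\nu)$, $\overline{\mathcal{P}}(\square)=\overline{\mathcal{P}}_\lambda(\mu\leftarrow\nu)$; other squares have $\mathcal{P}(\square)=\overline{\mathcal{P}}(\square)=1$. $\mathcal{P}(\Lambda)=\prod_\square\mathcal{P}(\square)$, $\overline{\mathcal{P}}(\Lambda)=\prod_\square\overline{\mathcal{P}}(\square)$, and $\mathcal{P}(\sigma\rightarrow P,Q)=\sum\mathcal{P}(\Lambda)$, $\overline{\mathcal{P}}(\sigma\leftarrow P,Q)=\sum\overline{\mathcal{P}}(\Lambda)$, sums over growths $\Lambda$ associated with $\sigma$ with $P(\Lambda)=P$, $Q(\Lambda)=Q$. *)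

From HB Require Import structures.
From mathcomp Require Import all_boot all_order all_algebra all_fingroup.
From mathcomp Require Import fraction.
Set Implicit Arguments. Unset Strict Implicit. Unset Printing Implicit Defensive.
Import Order.TTheory GRing.Theory Num.Theory.

Definition Kqt : fieldType := {fraction {poly {poly rat}}}.
Definition qv : Kqt := tofrac (('X : {poly rat})%:P : {poly {poly rat}}).
Definition tv : Kqt := tofrac ('X : {poly {poly rat}}).

Local Open Scope ring_scope.
Definition brk (i j : int) : Kqt := 1 - qv ^ i * tv ^ j.
Local Close Scope ring_scope.

(* Partitions (as weakly decreasing lists of positive parts), French      *)
(* convention, cells (x,y) with 1 <= x <= lambda_y, 1 <= y.               *)
Definition is_part (l : seq nat) : bool := sorted geq l && all (fun p => 0 < p) l.
Definition prow (l : seq nat) (y : nat) : nat := nth 0 l y.-1.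
Definition pcol (l : seq nat) (x : nat) : nat := count (fun p => x <= p) l.
Definition cells (l : seq nat) : seq (nat * nat) :=
  flatten [seq [seq (x, y) | x <- iota 1 (prow l y)] | y <- iota 1 (size l)].
Definition arm (l : seq nat) (c : nat * nat) : nat := prow l c.2 - c.1.
Definition leg (l : seq nat) (c : nat * nat) : nat := pcol l c.1 - c.2.
Definition nfun (l : seq nat) : nat := \sum_(c <- cells l) leg l c.
Definition nfun' (l : seq nat) : nat := \sum_(c <- cells l) arm l c.
Definition nskew (r k : seq nat) : int := (nfun r)%:Z - (nfun k)%:Z.
Definition nskew' (r k : seq nat) : int := (nfun' r)%:Z - (nfun' k)%:Z.
Definition subpart (k r : seq nat) : bool := all (fun c => c \in cells r) (cells k).
Definition inU (l nu : seq nat) : bool :=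
  [&& is_part nu, subpart l nu & sumn nu == (sumn l).+1].
Definition inD (l mu : seq nat) : bool :=
  [&& is_part mu, subpart mu l & (sumn mu).+1 == sumn l].
Definition inDstar (l mu : seq nat) : bool := inD l mu || (mu == l).

Definition skew (r k : seq nat) : seq (nat * nat) :=
  [seq c <- cells r | c \notin cells k].
Definition Rcells (r k : seq nat) : seq (nat * nat) :=
  [seq c <- cells k | has (fun d => d.2 == c.2) (skew r k)].
Definition Ccells (r k : seq nat) : seq (nat * nat) :=
  [seq c <- cells k | has (fun d => d.1 == c.1) (skew r k)].

Local Open Scope ring_scope.
Definition alpha (r k : seq nat) : Kqt :=
  (\prod_(c <- Rcells r k)
      (brk (arm k c) (leg k c + 1)%N / brk (arm r c) (leg r c + 1)%N)) *
  (\prod_(c <- Ccells r k)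
      (brk (arm k c + 1)%N (leg k c) / brk (arm r c + 1)%N (leg r c))).
Definition alphabar (r k : seq nat) : Kqt :=
  (\prod_(c <- Rcells r k)
      (brk (arm k c + 1)%N (leg k c) / brk (arm r c + 1)%N (leg r c))) *
  (\prod_(c <- Ccells r k)
      (brk (arm k c) (leg k c + 1)%N / brk (arm r c) (leg r c + 1)%N)).
Definition beta (r k : seq nat) : Kqt := (alpha r k)^-1.
Definition betabar (r k : seq nat) : Kqt := (alphabar r k)^-1.

Definition gammaf (A B : int) : Kqt :=
  (1 - qv ^ A * tv ^ B) * (1 - qv ^ (A + 1) * tv ^ (B - 1)) / ((1 - qv) * (1 - tv)).

Definition Ploc (l mu nu : seq nat) : Kqt :=
  if mu == l then tv ^ (nskew nu l) * alpha nu l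
  else let A := nskew' l mu - nskew' nu l in
       let B := nskew nu l - nskew l mu in
       tv ^ (B - 1) * alpha nu l * beta l mu / gammaf A B.
Definition Pbarloc (l mu nu : seq nat) : Kqt :=
  if mu == l then tv ^ (nskew nu l) * alphabar nu l
  else let A := nskew' l mu - nskew' nu l in
       let B := nskew nu l - nskew l mu in
       tv ^ (B - 1) * alphabar nu l * betabar l mu / gammaf A B.
Local Close Scope ring_scope.

(* Standard Young tableaux, as lists of rows (row y is nth (y-1)).        *)
Definition tshape (T : seq (seq nat)) : seq nat := map size T.
Definition entry (T : seq (seq nat)) (c : nat * nat) : nat :=
  nth 0 (nth [::] T c.2.-1) c.1.-1.
Definition is_SYT (n : nat) (T : seq (seq nat)) : bool :=
  [&& is_part (tshape T), sumn (tshape T) == n,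
      perm_eq (flatten T) (iota 1 n),
      all (fun c => ((c.1.+1, c.2) \in cells (tshape T)) ==>
                    (entry T c < entry T (c.1.+1, c.2))) (cells (tshape T)) &
      all (fun c => ((c.1, c.2.+1) \in cells (tshape T)) ==>
                    (entry T c < entry T (c.1, c.2.+1))) (cells (tshape T))].

(* Growths.  Every partition of size <= n is coded (bijectively, among    *)
(* nonincreasing codes) by a nonincreasing f : 'I_n -> 'I_n.+1 (its parts *)
(* padded with zeros).  A labeling of the (n+1)x(n+1) vertices is a       *)
(* finite function, so sums over growths are finite sums.                 *)
Definition pcode (n : nat) := {ffun 'I_n -> 'I_n.+1}.
Definition pcode_ok n (f : pcode n) : bool :=
  [forall i : 'I_n, forall j : 'I_n, (i <= j) ==> (f j <= f i)].
Definition to_part n (f : pcode n) : seq nat :=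
  [seq x <- [seq val (f i) | i <- enum 'I_n] | 0 < x].
Definition labeling (n : nat) := {ffun 'I_n.+1 * 'I_n.+1 -> pcode n}.
Definition lab n (L : labeling n) (i j : nat) : seq nat :=
  to_part (L (inord i, inord j)).

(* square (i,j) (1-based) contains a 1 iff i = sigma(j); with 0-based
   ordinals i0 = i-1, j0 = j-1 this is i0 = s j0. *)
Definition is_growth n (s : 'S_n) (L : labeling n) : bool :=
  [forall v, pcode_ok (L v)] &&
  [forall i : 'I_n.+1, forall j : 'I_n.+1,
    [&& (j < n) ==> subpart (lab L i j) (lab L i j.+1),
        (i < n) ==> subpart (lab L i j) (lab L i.+1 j) &
        sumn (lab L i j) == #|[set j0 : 'I_n | (j0 < j) && (s j0 < i)]| ]].

(* P(Lambda): cell c gets the entry i with c in Lambda_{i,n} \ Lambda_{i-1,n},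
   i.e. the least i with c in Lambda_{i,n}; Q(Lambda) likewise with Lambda_{n,i}. *)
Definition P_of n (L : labeling n) : seq (seq nat) :=
  let sh := lab L n n in
  [seq [seq find (fun i => (x, y) \in cells (lab L i n)) (iota 0 n.+1)
       | x <- iota 1 (prow sh y)] | y <- iota 1 (size sh)].
Definition Q_of n (L : labeling n) : seq (seq nat) :=
  let sh := lab L n n in
  [seq [seq find (fun i => (x, y) \in cells (lab L n i)) (iota 0 n.+1)
       | x <- iota 1 (prow sh y)] | y <- iota 1 (size sh)].

Local Open Scope ring_scope.
(* weight of square (i,j), 1 <= i,j <= n: NW (i-1,j-1), NE (i-1,j),
   SW (i,j-1), SE (i,j); nontrivial only for squares of type III. *)
Definition sq_weight (loc : seq nat -> seq nat -> seq nat -> Kqt)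
    n (L : labeling n) (i j : nat) : Kqt :=
  let nw := lab L i.-1 j.-1 in let ne := lab L i.-1 j in
  let sw := lab L i j.-1 in let se := lab L i j in
  if [&& ne == sw, inDstar ne nw & inU ne se] then loc ne nw se else 1.
Definition growth_weight loc n (L : labeling n) : Kqt :=
  \prod_(i < n) \prod_(j < n) sq_weight loc L i.+1 j.+1.

Definition Pgrowth n (s : 'S_n) (P Q : seq (seq nat)) : Kqt :=
  \sum_(L : labeling n | [&& is_growth s L, P_of L == P & Q_of L == Q])
     growth_weight Ploc L.
Definition Pbargrowth n (s : 'S_n) (P Q : seq (seq nat)) : Kqt :=
  \sum_(L : labeling n | [&& is_growth s L, P_of L == P & Q_of L == Q])
     growth_weight Pbarloc L.
Local Close Scope ring_scope.

From HB Require Import structures.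
From mathcomp Require Import all_boot all_order all_algebra all_fingroup.
From mathcomp Require Import fraction.
Set Implicit Arguments. Unset Strict Implicit. Unset Printing Implicit Defensive.

(* Reflecting a growth in the main diagonal turns a growth for [s] into one
   for [s^-1] and exchanges the roles of P and Q.  The weight of a square
   only depends on its NW and SE labels and on the common label of its NE and
   SW corners, so it is invariant under the reflection, and the two sums agree
   term by term. *)

Definition transpose_lab n (L : labeling n) : labeling n := [ffun v => L (v.2, v.1)].

Lemma transpose_labK n : involutive (@transpose_lab n).
Proof. by move=> L; apply/ffunP => -[a b]; rewrite !ffunE. Qed.

Lemma lab_transpose n (L : labeling n) i j : lab (transpose_lab L) i j = lab L j i.
Proof. by rewrite /lab ffunE. Qed.

Lemma P_of_transpose n (L : labeling n) : P_of (transpose_lab L) = Q_of L.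
Proof.
rewrite /P_of /Q_of lab_transpose; apply: eq_map => y; apply: eq_map => x.
by apply: eq_find => i; rewrite lab_transpose.
Qed.

Lemma Q_of_transpose n (L : labeling n) : Q_of (transpose_lab L) = P_of L.
Proof. by rewrite -{2}(transpose_labK L) P_of_transpose. Qed.

Lemma card_ones_invg n (s : 'S_n) (i j : nat) :
  #|[set j0 : 'I_n | (j0 < j) && ((s^-1)%g j0 < i)]| =
  #|[set j0 : 'I_n | (j0 < i) && (s j0 < j)]|.
Proof.
rewrite -(card_imset _ (@perm_inj _ (s^-1)%g)); apply: eq_card => k.
rewrite inE; apply/imsetP/idP => [[x] | /andP[ki sk]].
  by rewrite inE => /andP[xi sx] ->; rewrite permKV xi sx.
by exists (s k); rewrite ?inE permK ?sk.
Qed.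

Lemma is_growth_transpose n (s : 'S_n) (L : labeling n) :
  is_growth s L -> is_growth (s^-1)%g (transpose_lab L).
Proof.
case/andP=> /forallP codes_ok /forallP growth_ok; apply/andP; split.
  by apply/forallP => v; rewrite ffunE.
apply/forallP => i; apply/forallP => j.
have /forallP /(_ i) /and3P[incl_row incl_col size_ok] := growth_ok j.
by rewrite !lab_transpose incl_row incl_col card_ones_invg.
Qed.

Lemma is_growth_transposeE n (s : 'S_n) (L : labeling n) :
  is_growth (s^-1)%g (transpose_lab L) = is_growth s L.
Proof.
apply/idP/idP => [|]; last exact: is_growth_transpose.
by move/is_growth_transpose; rewrite invgK transpose_labK.
Qed.

Lemma sq_weight_transpose loc n (L : labeling n) i j :
  sq_weight loc (transpose_lab L) i j = sq_weight loc L j i.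
Proof.
rewrite /sq_weight !lab_transpose.
by case: (eqVneq (lab L j.-1 i) (lab L j i.-1)) => [->|].
Qed.

Lemma growth_weight_transpose loc n (L : labeling n) :
  growth_weight loc (transpose_lab L) = growth_weight loc L.
Proof.
rewrite /growth_weight exchange_big /=.
by apply: eq_bigr => i _; apply: eq_bigr => j _; apply: sq_weight_transpose.
Qed.

Lemma sum_growth_weight_invg loc n (s : 'S_n) (P Q : seq (seq nat)) :
  (\sum_(L : labeling n | [&& is_growth s L, P_of L == P & Q_of L == Q])
     growth_weight loc L =
   \sum_(L : labeling n | [&& is_growth (s^-1)%g L, P_of L == Q & Q_of L == P])
     growth_weight loc L)%R.
Proof.
rewrite [RHS](reindex_inj (can_inj (@transpose_labK n))) /=.
apply: eq_big => [L|L _]; last by rewrite growth_weight_transpose.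
rewrite is_growth_transposeE P_of_transpose Q_of_transpose.
by rewrite [_ && (Q_of L == Q)]andbC.
Qed.

(* The symmetry holds for arbitrary P and Q. *)
Theorem theorem4p26 (n : nat) (s : 'S_n) (P Q : seq (seq nat)) :
  is_SYT n P -> is_SYT n Q -> tshape P = tshape Q ->
  Pgrowth s P Q = Pgrowth (s^-1)%g Q P /\
  Pbargrowth s P Q = Pbargrowth (s^-1)%g Q P.
Proof. by move=> _ _ _; split; apply: sum_growth_weight_invg. Qed.
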